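(* Let $X$ and $Y$ be connected graphs with degree bounded by $D$ and $f\colon X\to Y$ an $(L,A)$-quasi-isometry. For any $\alpha>0$ let $\beta\coloneqq D^{-L(A+2)-A-2}\alpha$. Then the preimage of a $\beta$-small subset of $Y$ is $\alpha$-small in $X$.
   Context: Connected graphs are metric spaces with the path-length metric on vertices. An $(L,A)$-quasi-isometry is a map $f\colon X\to Y$ with $\frac1L d_X(x,x')-A\leq d_Y(f(x),f(x'))\leq L d_X(x,x')+A$ for all $x,x'$, and such that every $y\in Y$ is within distance $A$ of $f(X)$. A subset $S$ of a finite graph $Z$ is $\alpha$-small if $|S|<\alpha|Z|$, where $|\cdot|$ denotes number of vertices. *)

From HB Require Import structures.
From mathcomp Require Import all_boot all_order all_algebra.
From mathcomp Require Import reals exp.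
Set Implicit Arguments. Unset Strict Implicit. Unset Printing Implicit Defensive.
Import Order.TTheory GRing.Theory Num.Theory.

Definition simple_graph (T : finType) (e : rel T) : Prop :=
  symmetric e /\ irreflexive e.

Definition connected_graph (T : finType) (e : rel T) : Prop :=
  (0 < #|T|)%N /\ forall x y : T, connect e x y.

Definition degree_bounded (T : finType) (e : rel T) (D : nat) : Prop :=
  forall x : T, (#|[set y | e x y]| <= D)%N.

Definition walk_of (T : finType) (e : rel T) (n : nat) (x y : T) : bool :=
  [exists p : n.-tuple T, path e x p && (last x p == y)].

(* path-length metric: the least n such that there is a walk of length n
   from x to y (for a connected graph this is < #|T|). *)
Definition gdist (T : finType) (e : rel T) (x y : T) : nat :=
  find (fun n => walk_of e n x y) (iota 0 #|T|).

Local Open Scope ring_scope.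

Definition quasi_isometry (R : realType) (TX TY : finType)
    (eX : rel TX) (eY : rel TY) (L A : R) (f : TX -> TY) : Prop :=
  (forall x x' : TX,
      L^-1 * (gdist eX x x')%:R - A <= (gdist eY (f x) (f x'))%:R /\
      (gdist eY (f x) (f x'))%:R <= L * (gdist eX x x')%:R + A)
  /\ (forall y : TY, exists x : TX, (gdist eY y (f x))%:R <= A).

Definition small (R : realType) (T : finType) (alpha : R) (S : {set T}) : Prop :=
  (#|S|%:R < alpha * #|T|%:R).

(* The fibres of f have diameter at most L A and the A-balls around the image
   of f cover Y, while an r-ball of a graph of degree at most D has at most
   D^(r+1) vertices. Hence |f^-1(S)| <= D^(L A + 1) |S| and
   |Y| <= D^(A + 1) |X|, and the exponent of D in beta is chosen so that
   these two factors are absorbed: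
   |f^-1(S)| < D^(L A + 1) beta |Y| <= D^(-2 L) alpha |X| <= alpha |X|. *)
From mathcomp Require Import all_boot all_order all_algebra reals exp.
From mathcomp Require Import ring.
Import Order.TTheory GRing.Theory Num.Theory.
Set Implicit Arguments. Unset Strict Implicit.

Lemma card_bigcup_le (I T : finType) (P : {set I}) (F : I -> {set T}) n :
  (forall i, i \in P -> #|F i| <= n) -> #|\bigcup_(i in P) F i| <= #|P| * n.
Proof.
move=> leFn; apply: leq_trans (unstable.card_big_setU _ _ _) _.
by rewrite -sum_nat_const; apply: leq_sum.
Qed.

Lemma sum_expn_le_expn D k : 2 <= D -> \sum_(j < k.+1) D ^ j <= D ^ k.+1.
Proof.
move=> D2; elim: k => [|k IH]; first by rewrite big_ord1 expn1 ltnW.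
rewrite big_ord_recr /= (expnS D k.+1).
apply: (@leq_trans (D ^ k.+1 + D ^ k.+1)); first by rewrite leq_add2r.
by rewrite addnn -mul2n leq_mul2r D2 orbT.
Qed.

Section Balls.
Variables (T : finType) (e : rel T).

Lemma walk_of0 x y : walk_of e 0 x y = (x == y).
Proof.
apply/existsP/idP => [[p /andP[_]]|/eqP->]; first by rewrite tuple0.
by exists [tuple]; rewrite /= eqxx.
Qed.

Lemma gdist_refl x : gdist e x x = 0.
Proof.
rewrite /gdist; have : 0 < #|T| by apply/card_gt0P; exists x.
by case: #|T| => // n _ /=; rewrite walk_of0 eqxx.
Qed.

Lemma gdist_walk_of x y : gdist e x y < #|T| -> walk_of e (gdist e x y) x y.
Proof.
rewrite /gdist => ltT.
have hw : has (fun n => walk_of e n x y) (iota 0 #|T|) by rewrite has_find size_iota.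
by have := nth_find 0 hw; rewrite nth_iota ?add0n // -{2}(size_iota 0 #|T|) -has_find.
Qed.

Hypothesis e_sym : symmetric e.

Lemma walk_ofS x y n :
  walk_of e n.+1 x y -> exists2 z, walk_of e n z y & e z x.
Proof.
case/existsP => p; case/tupleP: p => z p /= /andP[/andP[exz pz] lp].
exists z; last by rewrite e_sym.
by apply/existsP; exists p; rewrite pz lp.
Qed.

Variable D : nat.
Hypothesis e_deg : degree_bounded e D.

Lemma card_walk_of_to c n : #|[set x | walk_of e n x c]| <= D ^ n.
Proof.
elim: n => [|n IH].
  rewrite expn0 -(cards1 c); apply: subset_leq_card.
  by apply/subsetP => x; rewrite !inE walk_of0.
apply: (@leq_trans #|\bigcup_(z in [set x | walk_of e n x c]) [set x | e z x]|).
  apply: subset_leq_card; apply/subsetP => x; rewrite inE => /walk_ofS[z wz ezx].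
  by apply/bigcupP; exists z; rewrite !inE.
apply: leq_trans (card_bigcup_le (n := D) _) _ => [z _|]; first exact: e_deg.
by rewrite expnSr leq_mul2r IH orbT.
Qed.

Hypothesis D_ge2 : 2 <= D.

Lemma card_ball c k : #|[set x | gdist e x c <= k]| <= D ^ k.+1.
Proof.
have [leTk | ltkT] := leqP #|T| k.
  apply: leq_trans (max_card _) (leq_trans leTk (ltnW _)).
  by apply: leq_trans (ltnW (ltn_expl k.+1 (isT : 1 < 2))) _; rewrite leq_exp2r.
apply: (@leq_trans #|\bigcup_(j < k.+1) [set x | walk_of e j x c]|).
  apply: subset_leq_card; apply/subsetP => x; rewrite inE => lek.
  apply/bigcupP; exists (Ordinal (lek : gdist e x c < k.+1)) => //.
  by rewrite inE gdist_walk_of // (leq_ltn_trans lek ltkT).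
apply: leq_trans (unstable.card_big_setU _ _ _) (leq_trans _ (sum_expn_le_expn k D_ge2)).
by apply: leq_sum => j _; apply: card_walk_of_to.
Qed.

End Balls.

Local Open Scope ring_scope.

Lemma expn_truncn_le_powR (R : realType) (D : nat) (r : R) :
  (1 <= D)%N -> 0 <= r -> ((D ^ (Num.truncn r).+1)%:R : R) <= D%:R `^ (r + 1).
Proof.
move=> D1 r0; rewrite natrX -powR_mulrn ?ler0n //.
by apply: ler_powR; rewrite ?ler1n // -natr1 lerD2r truncn_le.
Qed.

Section QuasiIsometry.
Variables (R : realType) (TX TY : finType) (eX : rel TX) (eY : rel TY).
Variables (L A : R) (f : TX -> TY).
Hypothesis f_qi : quasi_isometry eX eY L A f.

Lemma quasi_isometry_const_ge0 (x : TX) : 0 <= A.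
Proof.
have [/(_ x x)[lo _] _] := f_qi.
by move: lo; rewrite !gdist_refl mulr0 sub0r oppr_le0.
Qed.

Hypothesis L_gt0 : 0 < L.

Lemma gdist_fibre_le x x' : f x = f x' -> (gdist eX x x')%:R <= L * A.
Proof.
have [/(_ x x')[lo _] _] := f_qi => fxx'.
by move: lo; rewrite fxx' gdist_refl subr_le0 ler_pdivrMl.
Qed.

Hypothesis A_ge0 : 0 <= A.
Variable D : nat.
Hypothesis D_ge2 : (2 <= D)%N.
Hypotheses (eX_sym : symmetric eX) (eX_deg : degree_bounded eX D).
Hypotheses (eY_sym : symmetric eY) (eY_deg : degree_bounded eY D).
Let LA_ge0 : 0 <= L * A := mulr_ge0 (ltW L_gt0) A_ge0.

Lemma card_fibre_le y : (#|f @^-1: [set y]| <= D ^ (Num.truncn (L * A)).+1)%N.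
Proof.
have [-> | [x0]] := set_0Vmem (f @^-1: [set y]); first by rewrite cards0.
rewrite !inE => /eqP fx0; apply: leq_trans (card_ball eX_sym eX_deg D_ge2 x0 _).
apply: subset_leq_card; apply/subsetP => x; rewrite !inE => /eqP fx.
by rewrite truncn_ge_nat // gdist_fibre_le // fx fx0.
Qed.

Lemma card_preimset_le (S : {set TY}) :
  #|f @^-1: S|%:R <= #|S|%:R * D%:R `^ (L * A + 1).
Proof.
apply: le_trans (_ : (#|S| * D ^ (Num.truncn (L * A)).+1)%:R <= _); last first.
  by rewrite natrM ler_wpM2l // expn_truncn_le_powR // ltnW.
rewrite ler_nat; apply: leq_trans (card_bigcup_le (fun y _ => card_fibre_le y)).
apply: subset_leq_card; apply/subsetP => x; rewrite inE => Sfx.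
by apply/bigcupP; exists (f x); rewrite ?inE.
Qed.

Lemma card_codomain_le : #|TY|%:R <= #|TX|%:R * D%:R `^ (A + 1).
Proof.
apply: le_trans (_ : (#|TX| * D ^ (Num.truncn A).+1)%:R <= _); last first.
  by rewrite natrM ler_wpM2l // expn_truncn_le_powR // ltnW.
rewrite ler_nat -!cardsT.
apply: leq_trans (card_bigcup_le (fun x _ => card_ball eY_sym eY_deg D_ge2 (f x) _)).
apply: subset_leq_card; apply/subsetP => y _; have [_ /(_ y)[x near_fx]] := f_qi.
by apply/bigcupP; exists x; rewrite ?inE ?truncn_ge_nat.
Qed.

End QuasiIsometry.

Lemma powR_exponents_cancel_le1 (R : realType) (d L A : R) : 1 <= d -> 0 <= L ->
  d `^ (- (L * (A + 2)) - A - 2) * d `^ (L * A + 1) * d `^ (A + 1) <= 1.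
Proof.
move=> d_ge1 L_ge0; have d_neq0 : d != 0 by rewrite gt_eqF ?(lt_le_trans ltr01).
rewrite -!powRD ?d_neq0 ?implybT //.
have -> : - (L * (A + 2)) - A - 2 + (L * A + 1) + (A + 1) = - (L * 2) by ring.
by rewrite -[leRHS](powRr0 d) (ler_powR d_ge1) // oppr_le0 mulr_ge0.
Qed.

Theorem lemma2p5 (R : realType) (TX TY : finType) (eX : rel TX) (eY : rel TY)
    (D : nat) (L A : R) (f : TX -> TY) (alpha : R) :
  simple_graph eX -> simple_graph eY ->
  connected_graph eX -> connected_graph eY ->
  (2 <= D)%N -> degree_bounded eX D -> degree_bounded eY D ->
  0 < L -> quasi_isometry eX eY L A f ->
  0 < alpha ->
  let beta := (D%:R `^ (- (L * (A + 2)) - A - 2)) * alpha in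
  forall S : {set TY}, small beta S -> small alpha (f @^-1: S).
Proof.
move=> [eX_sym _] [eY_sym _] [/card_gt0P[x0 _] _] _ D_ge2 eX_deg eY_deg L_gt0 f_qi
  alpha_gt0 beta S; rewrite /small => S_small.
have A_ge0 := quasi_isometry_const_ge0 f_qi x0.
have D_ge1 : 1 <= D%:R :> R by rewrite ler1n ltnW.
apply: le_lt_trans (card_preimset_le f_qi L_gt0 A_ge0 D_ge2 eX_sym eX_deg S) _.
rewrite -(ltr_pM2r (powR_gt0 (L * A + 1) (lt_le_trans ltr01 D_ge1))) in S_small.
apply: lt_le_trans S_small _.
apply: le_trans (_ : beta * (#|TX|%:R * D%:R `^ (A + 1)) * D%:R `^ (L * A + 1) <= _).
  have Y_le := card_codomain_le f_qi A_ge0 D_ge2 eY_sym eY_deg.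
  by rewrite ler_wpM2r ?powR_ge0 // ler_wpM2l // mulr_ge0 ?powR_ge0 // ltW.
have -> : beta * (#|TX|%:R * D%:R `^ (A + 1)) * D%:R `^ (L * A + 1) =
    alpha * #|TX|%:R * (D%:R `^ (- (L * (A + 2)) - A - 2) *
      D%:R `^ (L * A + 1) * D%:R `^ (A + 1)) by rewrite /beta; ring.
rewrite ler_piMr ?powR_exponents_cancel_le1 ?(ltW L_gt0) //.
by rewrite mulr_ge0 // ltW.
Qed.
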